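(* Let $\sigma:\mathbb{R}\to\mathbb{R}$ be bounded and differentiable with bounded derivative. Let $d,r,L,K_n,n\in\mathbb{N}$ with $r\ge 2d$, $c_2>0$, data $(X_1,Y_1),\dots,(X_n,Y_n)\in\mathbb{R}^d\times\mathbb{R}$, and let $\alpha_n\ge 1$, $L_n>0$, $t_n\ge L_n$, $\gamma_n^*\ge 1$, $B_n\ge 1$. Let $\mathbf{w},\mathbf{v}$ be weight vectors such that $|w^{(L)}_{1,1,k}|\le\gamma_n^*$ for $k=1,\dots,K_n$, $|w^{(l)}_{k,i,j}|\le B_n$ for all $k,i,j$ and $l=1,\dots,L-1$, and \[ \|\mathbf{w}-\mathbf{v}\|_\infty^2\le \frac{2t_n}{L_n}\cdot\max\{F_n(\mathbf{v}),1\}. \] Then \[ \|(\nabla_{\mathbf{w}}F_n)(\mathbf{w})\|\le c_5\cdot K_n^{3/2}\cdot B_n^{2L}\cdot(\gamma_n^* )^2\cdot\alpha_n^2\cdot\sqrt{\frac{t_n}{L_n}\cdot\max\{F_n(\mathbf{v}),1\}}, \] where $c_5>0$ is a constant depending only on $\sigma,d,r,L,c_2$.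
   Context: For a weight vector $\mathbf{w}=(w^{(l)}_{k,i,j})$ define $f_{\mathbf{w}}(x)=\sum_{j=1}^{K_n} w^{(L)}_{1,1,j}f^{(L)}_{j,1}(x)$ ($x\in\mathbb{R}^d$), where for $k\in\{1,\dots,K_n\}$, $i\in\{1,\dots,r\}$: $f^{(l)}_{k,i}(x)=\sigma\big(\sum_{j=1}^r w^{(l-1)}_{k,i,j}f^{(l-1)}_{k,j}(x)+w^{(l-1)}_{k,i,0}\big)$ for $l=2,\dots,L$ and $f^{(1)}_{k,i}(x)=\sigma\big(\sum_{j=1}^d w^{(0)}_{k,i,j}x^{(j)}+w^{(0)}_{k,i,0}\big)$. The weight vector consists of all these weights (outer weights $w^{(L)}_{1,1,j}$, $j=1,\dots,K_n$; $w^{(l)}_{k,i,j}$, $1\le l\le L-1$, $j\in\{0,\dots,r\}$; $w^{(0)}_{k,i,j}$, $j\in\{0,\dots,d\}$). Define $F_n(\mathbf{w})=\frac1n\sum_{i=1}^n|f_{\mathbf{w}}(X_i)-Y_i|^2\,1_{[-\alpha_n,\alpha_n]^d}(X_i)+c_2\sum_{j=1}^{K_n}|w^{(L)}_{1,1,j}|^2$. $\|\cdot\|$ is the Euclidean norm and $\|\cdot\|_\infty$ the maximum norm of a weight vector. *)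

From Stdlib Require Import Reals Lra Lia List Arith.
From Coquelicot Require Import Coquelicot.
Import ListNotations.
Open Scope R_scope.

Fixpoint rsum1 (f : nat -> R) (n : nat) : R :=
  match n with O => 0 | S m => rsum1 f m + f (S m) end.

(* A weight vector: w l k i j stands for w^{(l)}_{k,i,j}.
   Only the coordinates listed in [coords] are genuine weights. *)
Definition Weights := nat -> nat -> nat -> nat -> R.

(* Points of R^d: x j = x^{(j)}, j = 1..d. *)
Definition Pt := nat -> R.

(* hid m k i x = f^{(m+1)}_{k,i}(x) *)
Fixpoint hid (sigma : R -> R) (d r : nat) (w : Weights) (m k i : nat) (x : Pt) : R :=
  match m with
  | O => sigma (rsum1 (fun j => w 0%nat k i j * x j) d + w 0%nat k i 0%nat)
  | S m' => sigma (rsum1 (fun j => w (S m') k i j * hid sigma d r w m' k j x) r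
                   + w (S m') k i 0%nat)
  end.

Definition fnet (sigma : R -> R) (d r L K : nat) (w : Weights) (x : Pt) : R :=
  rsum1 (fun j => w L 1%nat 1%nat j * hid sigma d r w (L - 1) j 1%nat x) K.

Fixpoint box_ind (alpha : R) (x : Pt) (d : nat) : R :=
  match d with
  | O => 1
  | S d' => (if Rle_dec (Rabs (x (S d'))) alpha then 1 else 0) * box_ind alpha x d'
  end.

Definition Fobj (sigma : R -> R) (d r L K n : nat) (c2 alpha : R)
  (X : nat -> Pt) (Y : nat -> R) (w : Weights) : R :=
  / INR n * rsum1 (fun i => (fnet sigma d r L K w (X i) - Y i) ^ 2
                              * box_ind alpha (X i) d) n
  + c2 * rsum1 (fun j => (w L 1%nat 1%nat j) ^ 2) K.

Definition coord := (nat * nat * nat * nat)%type.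

Definition coords (d r L K : nat) : list coord :=
  map (fun j => (L, 1%nat, 1%nat, j)) (seq 1 K)
  ++ flat_map (fun l => flat_map (fun k => flat_map (fun i =>
        map (fun j => (l, k, i, j)) (seq 0 (S r))) (seq 1 r)) (seq 1 K)) (seq 1 (L - 1))
  ++ flat_map (fun k => flat_map (fun i =>
        map (fun j => (0%nat, k, i, j)) (seq 0 (S d))) (seq 1 r)) (seq 1 K).

Definition at_c (w : Weights) (c : coord) : R :=
  let '(l, k, i, j) := c in w l k i j.

Definition upd (w : Weights) (c : coord) (t : R) : Weights :=
  let '(l0, k0, i0, j0) := c in
  fun l k i j => if (Nat.eqb l l0 && Nat.eqb k k0 && Nat.eqb i i0 && Nat.eqb j j0)%bool
                 then t else w l k i j.

Definition maxnorm (d r L K : nat) (w : Weights) : R :=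
  fold_right Rmax 0 (map (fun c => Rabs (at_c w c)) (coords d r L K)).

Definition partial (F : Weights -> R) (w : Weights) (c : coord) : R :=
  Derive (fun t => F (upd w c t)) (at_c w c).

Definition gradnorm (d r L K : nat) (F : Weights -> R) (w : Weights) : R :=
  sqrt (fold_right Rplus 0 (map (fun c => (partial F w c) ^ 2) (coords d r L K))).

Definition wsub (w v : Weights) : Weights := fun l k i j => w l k i j - v l k i j.

From Stdlib Require Import Reals Lra Lia List FunctionalExtensionality.
From Coquelicot Require Import Coquelicot.
Open Scope R_scope.

(* Instead of computing the gradient, bound every partial derivative by a one-sided
   Lipschitz constant of F_n along that coordinate. Moving one weight by h moves every hidden
   unit by O(B_n^(L-1) alpha_n h) (sigma is bounded and, by the mean value theorem,
   Lipschitz), hence f_w by O(gamma B_n^(L-1) alpha_n h) =: D h on [-alpha_n, alpha_n]^d, and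
   the empirical risk by h D (D + 2 R) + O(gamma h), where R is the mean absolute residual of w.
   Comparing with v, R is at most the mean absolute residual of v, which by AM-GM is at most
   sqrt(max{F_n(v), 1}), plus sup |f_w - f_v| = O(K_n (gamma + ||w - v||_inf)); the hypothesis
   on ||w - v||_inf makes all of this O(K_n gamma B_n^L alpha_n sqrt(t_n/L_n max{F_n(v),1})).
   Summing the squares over the K_n (1 + (L-1) r (r+1) + r (d+1)) coordinates contributes
   the remaining factor sqrt(K_n). *)

Lemma rsum1_le f g n :
  (forall j, (1 <= j <= n)%nat -> f j <= g j) -> rsum1 f n <= rsum1 g n.
Proof.
  induction n as [|n IH]; intros H; simpl; [lra|].
  apply Rplus_le_compat; [apply IH; intros; apply H|apply H]; lia.
Qed.

Lemma rsum1_add f g n : rsum1 (fun j => f j + g j) n = rsum1 f n + rsum1 g n.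
Proof. induction n as [|n IH]; simpl; [lra|]. rewrite IH. ring. Qed.

Lemma rsum1_sub f g n : rsum1 (fun j => f j - g j) n = rsum1 f n - rsum1 g n.
Proof. induction n as [|n IH]; simpl; [lra|]. rewrite IH. ring. Qed.

Lemma rsum1_scal c f n : rsum1 (fun j => c * f j) n = c * rsum1 f n.
Proof. induction n as [|n IH]; simpl; [lra|]. rewrite IH. ring. Qed.

Lemma rsum1_const c n : rsum1 (fun _ => c) n = INR n * c.
Proof. induction n as [|n IH]; simpl rsum1; [simpl; lra|]. rewrite IH, S_INR. ring. Qed.

Lemma rsum1_nonneg f n : (forall j, (1 <= j <= n)%nat -> 0 <= f j) -> 0 <= rsum1 f n.
Proof.
  intros H. rewrite <- (Rmult_0_r (INR n)), <- rsum1_const. now apply rsum1_le.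
Qed.

Lemma rsum1_abs_le f n : Rabs (rsum1 f n) <= rsum1 (fun j => Rabs (f j)) n.
Proof.
  induction n as [|n IH]; simpl; [rewrite Rabs_R0; lra|].
  eapply Rle_trans; [apply Rabs_triang|lra].
Qed.

Lemma rsum1_abs_le_const f n t :
  (forall j, (1 <= j <= n)%nat -> Rabs (f j) <= t) -> Rabs (rsum1 f n) <= INR n * t.
Proof.
  intros H. rewrite <- rsum1_const. eapply Rle_trans; [apply rsum1_abs_le|].
  now apply rsum1_le.
Qed.

Lemma rsum1_single_le a k0 n :
  0 <= a -> rsum1 (fun k => if Nat.eqb k k0 then a else 0) n <= a.
Proof.
  intros Ha.
  enough (H : rsum1 (fun k => if Nat.eqb k k0 then a else 0) n
              <= if Nat.leb k0 n then a else 0) by (destruct (Nat.leb k0 n); lra).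
  induction n as [|n IH]; cbn [rsum1].
  - destruct (Nat.leb k0 0); lra.
  - revert IH. destruct (Nat.eqb_spec (S n) k0), (Nat.leb_spec k0 n), (Nat.leb_spec k0 (S n));
      intros; lia || lra.
Qed.

Lemma abs_mul_sub_le a b x y :
  Rabs (a * x - b * y) <= Rabs a * Rabs (x - y) + Rabs (a - b) * Rabs y.
Proof.
  replace (a * x - b * y) with (a * (x - y) + (a - b) * y) by ring.
  rewrite <- !Rabs_mult. apply Rabs_triang.
Qed.

Lemma abs_sq_sub_le a b :
  Rabs (a ^ 2 - b ^ 2) <= Rabs (a - b) * (Rabs (a - b) + 2 * Rabs b).
Proof.
  replace (a ^ 2 - b ^ 2) with ((a - b) * ((a - b) + 2 * b)) by ring.
  rewrite Rabs_mult. apply Rmult_le_compat_l; [apply Rabs_pos|].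
  eapply Rle_trans; [apply Rabs_triang|]. rewrite Rabs_mult, (Rabs_right 2) by lra. lra.
Qed.

Lemma abs_le_amgm z lam : 0 < lam -> Rabs z <= lam / 2 + z ^ 2 / (2 * lam).
Proof.
  intros Hlam. rewrite <- (pow2_abs z).
  apply (Rmult_le_reg_l (2 * lam)); [lra|].
  replace (2 * lam * (lam / 2 + Rabs z ^ 2 / (2 * lam))) with (lam * lam + Rabs z ^ 2)
    by (field; lra).
  pose proof (pow2_ge_0 (lam - Rabs z)). nra.
Qed.

Lemma lipschitz_of_bounded_Derive (f : R -> R) M' :
  (forall x, ex_derive f x) -> (forall x, Rabs (Derive f x) <= M') ->
  forall a b, Rabs (f a - f b) <= M' * Rabs (a - b).
Proof.
  intros Hd HM a b.
  destruct (MVT_cor4 f (Derive f) b (Rabs (a - b))) with (b := a) as [c [Hc _]].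
  - intros c _. apply Derive_correct, Hd.
  - lra.
  - rewrite Hc, Rabs_mult. apply Rmult_le_compat_r; [apply Rabs_pos|apply HM].
Qed.

Lemma Lim_seq_abs_le (u : nat -> R) P :
  (forall n, Rabs (u n) <= P) -> Rabs (real (Lim_seq u)) <= P.
Proof.
  intros H.
  assert (Hup : Rbar_le (Lim_seq u) P).
  { rewrite <- (Lim_seq_const P). apply Lim_seq_le_loc. exists 0%nat. intros n _.
    specialize (H n). apply Rabs_le_between in H. lra. }
  assert (Hlo : Rbar_le (- P) (Lim_seq u)).
  { rewrite <- (Lim_seq_const (- P)). apply Lim_seq_le_loc. exists 0%nat. intros n _.
    specialize (H n). apply Rabs_le_between in H. lra. }
  destruct (Lim_seq u); simpl in *; try contradiction.
  apply Rabs_le_between. lra.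
Qed.

(* [Derive f x] is the limit of the difference quotients along [h = 1 / (m + 1)],
   whether or not [f] is differentiable at [x]. *)
Lemma Derive_abs_le (f : R -> R) x P :
  (forall h, 0 < h <= 1 -> Rabs (f (x + h) - f x) <= h * P) -> Rabs (Derive f x) <= P.
Proof.
  intros H. apply Lim_seq_abs_le. intros m. simpl.
  assert (Hm : 0 < INR m + 1) by (pose proof (pos_INR m); lra).
  set (h := / (INR m + 1)).
  assert (Hh : 0 < h <= 1).
  { unfold h. split; [apply Rinv_0_lt_compat; lra|].
    rewrite <- Rinv_1. apply Rinv_le_contravar; pose proof (pos_INR m); lra. }
  specialize (H h Hh). rewrite Rplus_0_l. unfold Rdiv.
  rewrite Rabs_mult, Rabs_inv, (Rabs_right h) by lra.
  apply (Rmult_le_reg_r h); [lra|]. rewrite Rmult_assoc, Rinv_l by lra. lra.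
Qed.

Lemma upd_at_c (w : Weights) c : upd w c (at_c w c) = w.
Proof.
  destruct c as [[[l0 k0] i0] j0]. simpl.
  do 4 (apply functional_extensionality; intro).
  repeat match goal with |- context [Nat.eqb ?a ?b] => destruct (Nat.eqb_spec a b) end;
    simpl; subst; reflexivity.
Qed.

Lemma upd_sub_abs_le (w : Weights) l0 k0 i0 j0 h l k i j :
  let e := Rabs (w l k i j - upd w (l0, k0, i0, j0) (w l0 k0 i0 j0 + h) l k i j) in
  e <= (if Nat.eqb k k0 then Rabs h else 0) /\ e <= (if Nat.eqb j j0 then Rabs h else 0).
Proof.
  simpl.
  destruct (Nat.eqb_spec l l0), (Nat.eqb_spec k k0), (Nat.eqb_spec i i0), (Nat.eqb_spec j j0);
    simpl; subst;
    try (rewrite Rminus_diag, Rabs_R0; pose proof (Rabs_pos h); lra);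
    replace (w l0 k0 i0 j0 - (w l0 k0 i0 j0 + h)) with (- h) by ring;
    rewrite Rabs_Ropp; lra.
Qed.

Lemma partial_abs_le F w c P :
  (forall h, 0 < h <= 1 -> Rabs (F (upd w c (at_c w c + h)) - F w) <= h * P) ->
  Rabs (partial F w c) <= P.
Proof.
  intros H. apply Derive_abs_le. intros h Hh. rewrite upd_at_c. now apply H.
Qed.

Lemma sum_sq_le {A} (l : list A) (f : A -> R) P :
  (forall a, Rabs (f a) <= P) ->
  fold_right Rplus 0 (map (fun a => f a ^ 2) l) <= INR (length l) * P ^ 2.
Proof.
  intros H. induction l as [|a l IH]; cbn [length map fold_right]; [simpl; lra|].
  rewrite S_INR. specialize (H a).
  assert (f a ^ 2 <= P ^ 2)
    by (rewrite <- (pow2_abs (f a)); apply pow_incr; split; [apply Rabs_pos|exact H]).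
  lra.
Qed.

Lemma gradnorm_le d r L K F w P :
  0 <= P -> (forall c, Rabs (partial F w c) <= P) ->
  gradnorm d r L K F w <= sqrt (INR (length (coords d r L K))) * P.
Proof.
  intros HP H. unfold gradnorm.
  rewrite <- (sqrt_pow2 P HP). rewrite <- sqrt_mult_alt by apply pos_INR.
  apply sqrt_le_1_alt, sum_sq_le, H.
Qed.

Lemma length_flat_map_const {A B} (f : A -> list B) (l : list A) m :
  (forall x, length (f x) = m) -> length (flat_map f l) = (length l * m)%nat.
Proof.
  intros H. induction l as [|a l IH]; simpl; [reflexivity|].
  rewrite length_app, H, IH. lia.
Qed.

Lemma length_coords d r L K :
  length (coords d r L K) = (K * (1 + (L - 1) * (r * S r) + r * S d))%nat.
Proof.
  unfold coords. rewrite !length_app, length_map, length_seq.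
  rewrite (length_flat_map_const _ _ (K * (r * S r))).
  2:{ intros l. rewrite (length_flat_map_const _ _ (r * S r)); [rewrite length_seq; lia|].
      intros k. rewrite (length_flat_map_const _ _ (S r)); [rewrite length_seq; lia|].
      intros i. rewrite length_map, length_seq. lia. }
  rewrite (length_flat_map_const _ _ (r * S d)).
  2:{ intros k. rewrite (length_flat_map_const _ _ (S d)); [rewrite length_seq; lia|].
      intros i. rewrite length_map, length_seq. lia. }
  rewrite !length_seq. lia.
Qed.

Lemma fold_right_Rmax_ge (l : list R) x : In x l -> x <= fold_right Rmax 0 l.
Proof.
  induction l as [|a l IH]; simpl; [tauto|].
  intros [<-|Hx]; [apply Rmax_l|]. eapply Rle_trans; [apply IH, Hx|apply Rmax_r].
Qed.

Lemma outer_weight_sub_le d r L K (w v : Weights) k :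
  (1 <= k <= K)%nat ->
  Rabs (w L 1%nat 1%nat k - v L 1%nat 1%nat k) <= maxnorm d r L K (wsub w v).
Proof.
  intros Hk. apply fold_right_Rmax_ge, in_map_iff.
  exists (L, 1%nat, 1%nat, k). split; [reflexivity|].
  apply in_or_app. left. apply in_map_iff. exists k. split; [reflexivity|apply in_seq; lia].
Qed.

(** * The empirical risk *)

Lemma box_ind_cases alpha x d :
  box_ind alpha x d = 0 \/
  (box_ind alpha x d = 1 /\ forall j, (1 <= j <= d)%nat -> Rabs (x j) <= alpha).
Proof.
  induction d as [|d IH]; simpl.
  - right. split; [reflexivity|intros; lia].
  - destruct (Rle_dec (Rabs (x (S d))) alpha) as [Hx|]; [|left; ring].
    destruct IH as [H0|[H1 Hbox]]; [left; rewrite H0; ring|].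
    right. split; [rewrite H1; ring|].
    intros j Hj. destruct (Nat.eq_dec j (S d)); [subst; exact Hx|apply Hbox; lia].
Qed.

Lemma sq_loss_sub_abs_le (f0 f1 : Pt -> R) delta alpha d n (X : nat -> Pt) (Y : nat -> R) :
  0 <= delta ->
  (forall x, (forall j, (1 <= j <= d)%nat -> Rabs (x j) <= alpha) ->
     Rabs (f1 x - f0 x) <= delta) ->
  Rabs (rsum1 (fun i => (f1 (X i) - Y i) ^ 2 * box_ind alpha (X i) d) n
        - rsum1 (fun i => (f0 (X i) - Y i) ^ 2 * box_ind alpha (X i) d) n)
  <= delta * (INR n * delta
              + 2 * rsum1 (fun i => Rabs (f0 (X i) - Y i) * box_ind alpha (X i) d) n).
Proof.
  intros Hdelta Hf.
  apply Rle_trans with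
    (rsum1 (fun i => delta * (delta + 2 * (Rabs (f0 (X i) - Y i) * box_ind alpha (X i) d))) n).
  2:{ right. rewrite rsum1_scal, rsum1_add, rsum1_const, rsum1_scal. ring. }
  rewrite <- rsum1_sub. eapply Rle_trans; [apply rsum1_abs_le|]. apply rsum1_le. intros i _.
  pose proof (Rabs_pos (f0 (X i) - Y i)).
  destruct (box_ind_cases alpha (X i) d) as [E|[E Hx]]; rewrite E.
  - rewrite !Rmult_0_r, Rminus_diag, Rabs_R0. nra.
  - rewrite !Rmult_1_r. eapply Rle_trans; [apply abs_sq_sub_le|].
    replace (f1 (X i) - Y i - (f0 (X i) - Y i)) with (f1 (X i) - f0 (X i)) by ring.
    specialize (Hf (X i) Hx). pose proof (Rabs_pos (f1 (X i) - f0 (X i))).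
    apply Rmult_le_compat; lra.
Qed.

Lemma sq_sum_sub_abs_le (a b e : nat -> R) K G :
  (forall k, (1 <= k <= K)%nat -> Rabs (a k - b k) <= e k <= 1) ->
  (forall k, (1 <= k <= K)%nat -> Rabs (b k) <= G) ->
  Rabs (rsum1 (fun k => a k ^ 2) K - rsum1 (fun k => b k ^ 2) K) <= (2 * G + 1) * rsum1 e K.
Proof.
  intros He Hb. rewrite <- rsum1_sub, <- rsum1_scal.
  eapply Rle_trans; [apply rsum1_abs_le|]. apply rsum1_le. intros k Hk.
  specialize (He k Hk). specialize (Hb k Hk).
  pose proof (Rabs_pos (a k - b k)). pose proof (Rabs_pos (b k)).
  eapply Rle_trans; [apply abs_sq_sub_le|].
  apply Rle_trans with (e k * (1 + 2 * G)); [apply Rmult_le_compat; lra|right; ring].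
Qed.

Lemma mean_abs_le_sqrt (z b : nat -> R) n Phi :
  (1 <= n)%nat -> 0 < Phi -> (forall i, 0 <= b i <= 1) ->
  / INR n * rsum1 (fun i => z i ^ 2 * b i) n <= Phi ->
  / INR n * rsum1 (fun i => Rabs (z i) * b i) n <= sqrt Phi.
Proof.
  intros Hn HPhi Hb Hsq.
  set (lam := sqrt Phi).
  assert (Hlam : 0 < lam) by (apply sqrt_lt_R0; lra).
  assert (Hlam2 : lam * lam = Phi) by (apply sqrt_sqrt; lra).
  assert (Hn' : 0 < / INR n) by (apply Rinv_0_lt_compat, lt_0_INR; lia).
  apply Rle_trans with (/ INR n * rsum1 (fun i => lam / 2 + / (2 * lam) * (z i ^ 2 * b i)) n).
  - apply Rmult_le_compat_l; [lra|]. apply rsum1_le. intros i _.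
    pose proof (abs_le_amgm (z i) lam Hlam). specialize (Hb i).
    assert (0 <= / (2 * lam) * z i ^ 2)
      by (apply Rmult_le_pos; [left; apply Rinv_0_lt_compat; lra|apply pow2_ge_0]).
    unfold Rdiv in *. nra.
  - rewrite rsum1_add, rsum1_const, rsum1_scal.
    replace (/ INR n * (INR n * (lam / 2) + / (2 * lam) * rsum1 (fun i => z i ^ 2 * b i) n))
      with (lam / 2 + / (2 * lam) * (/ INR n * rsum1 (fun i => z i ^ 2 * b i) n))
      by (field; split; [lra|apply not_0_INR; lia]).
    apply Rle_trans with (lam / 2 + / (2 * lam) * (lam * lam)); [|right; field; lra].
    apply Rplus_le_compat_l, Rmult_le_compat_l; [left; apply Rinv_0_lt_compat|]; lra.
Qed.

Definition mean_abs_residual (sigma : R -> R) (d r L K n : nat) (alpha : R)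
  (X : nat -> Pt) (Y : nat -> R) (w : Weights) : R :=
  / INR n * rsum1 (fun i => Rabs (fnet sigma d r L K w (X i) - Y i) * box_ind alpha (X i) d) n.

Lemma mean_abs_residual_ge0 sigma d r L K n alpha X Y w :
  (1 <= n)%nat -> 0 <= mean_abs_residual sigma d r L K n alpha X Y w.
Proof.
  intros Hn. apply Rmult_le_pos; [left; apply Rinv_0_lt_compat, lt_0_INR; lia|].
  apply rsum1_nonneg. intros i _. apply Rmult_le_pos; [apply Rabs_pos|].
  destruct (box_ind_cases alpha (X i) d) as [E|[E _]]; rewrite E; lra.
Qed.

Lemma Fobj_sub_abs_le sigma d r L K n c2 alpha X Y (w w1 : Weights) delta e G :
  (1 <= n)%nat -> 0 <= c2 -> 0 <= delta ->
  (forall x, (forall j, (1 <= j <= d)%nat -> Rabs (x j) <= alpha) ->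
     Rabs (fnet sigma d r L K w1 x - fnet sigma d r L K w x) <= delta) ->
  (forall k, (1 <= k <= K)%nat -> Rabs (w1 L 1%nat 1%nat k - w L 1%nat 1%nat k) <= e k <= 1) ->
  (forall k, (1 <= k <= K)%nat -> Rabs (w L 1%nat 1%nat k) <= G) ->
  Rabs (Fobj sigma d r L K n c2 alpha X Y w1 - Fobj sigma d r L K n c2 alpha X Y w)
  <= delta * (delta + 2 * mean_abs_residual sigma d r L K n alpha X Y w)
     + c2 * ((2 * G + 1) * rsum1 e K).
Proof.
  intros Hn Hc2 Hdelta Hnet Hdev HwL.
  assert (Hn' : 0 < INR n) by (apply lt_0_INR; lia).
  unfold Fobj, mean_abs_residual.
  set (Res := rsum1 (fun i => Rabs (fnet sigma d r L K w (X i) - Y i) * _) n).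
  match goal with
  |- Rabs (/ INR n * ?L1 + c2 * ?P1 - (/ INR n * ?L0 + c2 * ?P0)) <= _ =>
    replace (/ INR n * L1 + c2 * P1 - (/ INR n * L0 + c2 * P0))
      with (/ INR n * (L1 - L0) + c2 * (P1 - P0)) by ring
  end.
  eapply Rle_trans; [apply Rabs_triang|].
  rewrite !Rabs_mult, (Rabs_right (/ INR n)), (Rabs_right c2)
    by (try apply Rle_ge, Rlt_le, Rinv_0_lt_compat; lra).
  apply Rplus_le_compat.
  - eapply Rle_trans.
    { apply Rmult_le_compat_l; [left; apply Rinv_0_lt_compat; lra|].
      exact (sq_loss_sub_abs_le _ _ delta alpha d n X Y Hdelta Hnet). }
    right. fold Res. field. lra.
  - apply Rmult_le_compat_l; [exact Hc2|]. now apply sq_sum_sub_abs_le.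
Qed.

(** * Perturbing the network *)

Section Network.

Variables (sigma : R -> R) (M M' : R) (d r : nat).
Hypothesis sigma_bounded : forall z, Rabs (sigma z) <= M.
Hypothesis sigma_lipschitz : forall a b, Rabs (sigma a - sigma b) <= M' * Rabs (a - b).
Hypothesis M'_ge0 : 0 <= M'.

Lemma M_ge0 : 0 <= M.
Proof. eapply Rle_trans; [apply Rabs_pos|apply (sigma_bounded 0)]. Qed.

Lemma hid_abs_le w m k i x : Rabs (hid sigma d r w m k i x) <= M.
Proof. destruct m; apply sigma_bounded. Qed.

Lemma neuron_sub_abs_le (a b x y : nat -> R) n t e :
  (forall j, (1 <= j <= n)%nat -> Rabs (a j * x j - b j * y j) <= t) ->
  Rabs (a 0%nat - b 0%nat) <= e ->
  Rabs (sigma (rsum1 (fun j => a j * x j) n + a 0%nat)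
        - sigma (rsum1 (fun j => b j * y j) n + b 0%nat)) <= M' * (INR n * t + e).
Proof.
  intros Ht He. eapply Rle_trans; [apply sigma_lipschitz|].
  apply Rmult_le_compat_l; [exact M'_ge0|].
  replace (rsum1 (fun j => a j * x j) n + a 0%nat - (rsum1 (fun j => b j * y j) n + b 0%nat))
    with (rsum1 (fun j => a j * x j - b j * y j) n + (a 0%nat - b 0%nat))
    by (rewrite rsum1_sub; ring).
  eapply Rle_trans; [apply Rabs_triang|].
  apply Rplus_le_compat; [apply rsum1_abs_le_const|]; assumption.
Qed.

Fixpoint hid_const (m : nat) : R :=
  match m with
  | O => M' * (INR d + 1)
  | S m => M' * (INR r * M + 1 + INR r * hid_const m)
  end.

Lemma hid_const_ge0 m : 0 <= hid_const m.
Proof.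
  pose proof M_ge0. pose proof (pos_INR d). pose proof (pos_INR r).
  induction m; simpl; apply Rmult_le_pos; auto; nra.
Qed.

(* Unit [i = 1] is read off the top layer even when [r = 0], hence the range [1 .. max r 1]. *)
Lemma hid_sub_abs_le w w' k x alpha B e :
  1 <= alpha -> 1 <= B -> 0 <= e ->
  (forall j, (1 <= j <= d)%nat -> Rabs (x j) <= alpha) ->
  (forall l i j, Rabs (w l k i j - w' l k i j) <= e) ->
  forall m,
  (forall l i j, (1 <= l <= m)%nat -> (1 <= i <= r)%nat -> (1 <= j <= r)%nat ->
     Rabs (w l k i j) <= B) ->
  forall i, (1 <= i <= Nat.max r 1)%nat ->
  Rabs (hid sigma d r w m k i x - hid sigma d r w' m k i x) <= hid_const m * B ^ m * alpha * e.
Proof.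
  intros Halpha HB He Hx Hdev m.
  pose proof M_ge0. pose proof (pos_INR d). pose proof (pos_INR r).
  induction m as [|m IH]; intros Hw i Hi; simpl.
  - eapply Rle_trans.
    { apply (neuron_sub_abs_le (w 0%nat k i) (w' 0%nat k i) x x d (e * alpha) e); [|apply Hdev].
      intros j Hj. eapply Rle_trans; [apply abs_mul_sub_le|].
      rewrite Rminus_diag, Rabs_R0, Rmult_0_r, Rplus_0_l.
      apply Rmult_le_compat; auto using Rabs_pos. }
    replace (M' * (INR d + 1) * 1 * alpha * e) with (M' * (INR d * (e * alpha) + alpha * e))
      by ring.
    apply Rmult_le_compat_l; [exact M'_ge0|]. nra.
  - set (C := hid_const m). assert (HC : 0 <= C) by apply hid_const_ge0.
    assert (HBm : 1 <= B ^ m) by (apply pow_R1_Rle; lra).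
    eapply Rle_trans.
    { apply (neuron_sub_abs_le (w (S m) k i) (w' (S m) k i) _ _ r
               (B * (C * B ^ m * alpha * e) + e * M) e); [|apply Hdev].
      intros j Hj. eapply Rle_trans; [apply abs_mul_sub_le|].
      apply Rplus_le_compat; apply Rmult_le_compat; auto using Rabs_pos, hid_abs_le.
      - apply Hw; lia.
      - apply IH; [intros; apply Hw|]; lia. }
    set (T := B * B ^ m * alpha).
    assert (HT : 1 <= T) by (unfold T; assert (1 <= B * B ^ m) by nra; nra).
    replace (INR r * (B * (C * B ^ m * alpha * e) + e * M) + e)
      with (INR r * C * T * e + INR r * M * e + e) by (unfold T; ring).
    replace (M' * (INR r * M + 1 + INR r * C) * (B * B ^ m) * alpha * e)
      with (M' * (INR r * C * T * e + INR r * M * T * e + T * e)) by (unfold T; ring).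
    apply Rmult_le_compat_l; [exact M'_ge0|].
    assert (0 <= INR r * M * e) by (apply Rmult_le_pos; [apply Rmult_le_pos|]; lra).
    nra.
Qed.

Lemma fnet_abs_le L K w x G :
  (forall k, (1 <= k <= K)%nat -> Rabs (w L 1%nat 1%nat k) <= G) ->
  Rabs (fnet sigma d r L K w x) <= INR K * (G * M).
Proof.
  intros HG. apply rsum1_abs_le_const. intros k Hk. rewrite Rabs_mult.
  apply Rmult_le_compat; auto using Rabs_pos, hid_abs_le.
Qed.

Lemma fnet_sub_abs_le L K w w' x alpha B G e1 e2 E1 E2 :
  1 <= alpha -> 1 <= B -> 0 <= G ->
  (forall j, (1 <= j <= d)%nat -> Rabs (x j) <= alpha) ->
  (forall l k i j, (1 <= l <= L - 1)%nat -> (1 <= k <= K)%nat ->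
     (1 <= i <= r)%nat -> (j <= r)%nat -> Rabs (w l k i j) <= B) ->
  (forall k, (1 <= k <= K)%nat -> Rabs (w L 1%nat 1%nat k) <= G) ->
  (forall k, 0 <= e1 k) ->
  (forall l k i j, Rabs (w l k i j - w' l k i j) <= e1 k) ->
  (forall k, Rabs (w L 1%nat 1%nat k - w' L 1%nat 1%nat k) <= e2 k) ->
  rsum1 e1 K <= E1 -> rsum1 e2 K <= E2 ->
  Rabs (fnet sigma d r L K w x - fnet sigma d r L K w' x)
  <= G * hid_const (L - 1) * B ^ (L - 1) * alpha * E1 + M * E2.
Proof.
  intros Halpha HB HG Hx Hw HwL He1 Hdev HdevL HE1 HE2.
  set (A := G * hid_const (L - 1) * B ^ (L - 1) * alpha).
  assert (HA : 0 <= A).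
  { pose proof (hid_const_ge0 (L - 1)). pose proof (pow_R1_Rle B (L - 1) HB).
    unfold A. repeat apply Rmult_le_pos; lra. }
  apply Rle_trans with (rsum1 (fun k => A * e1 k + M * e2 k) K).
  - unfold fnet. rewrite <- rsum1_sub.
    eapply Rle_trans; [apply rsum1_abs_le|]. apply rsum1_le. intros k Hk.
    eapply Rle_trans; [apply abs_mul_sub_le|]. apply Rplus_le_compat.
    + replace (A * e1 k) with (G * (hid_const (L - 1) * B ^ (L - 1) * alpha * e1 k))
        by (unfold A; ring).
      apply Rmult_le_compat; auto using Rabs_pos.
      apply hid_sub_abs_le; auto; [intros; apply Hw|]; lia.
    + rewrite Rmult_comm. apply Rmult_le_compat; auto using Rabs_pos, hid_abs_le.
  - pose proof M_ge0. rewrite rsum1_add, !rsum1_scal.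
    apply Rplus_le_compat; apply Rmult_le_compat_l; assumption.
Qed.

(* Moving coordinate [(l0, k0, i0, j0)] only affects the units of subnetwork [k0] and the outer
   weight [j0]. *)
Lemma fnet_upd_sub_abs_le L K w l0 k0 i0 j0 h x alpha B G :
  1 <= alpha -> 1 <= B -> 0 <= G ->
  (forall j, (1 <= j <= d)%nat -> Rabs (x j) <= alpha) ->
  (forall l k i j, (1 <= l <= L - 1)%nat -> (1 <= k <= K)%nat ->
     (1 <= i <= r)%nat -> (j <= r)%nat -> Rabs (w l k i j) <= B) ->
  (forall k, (1 <= k <= K)%nat -> Rabs (w L 1%nat 1%nat k) <= G) ->
  Rabs (fnet sigma d r L K (upd w (l0, k0, i0, j0) (w l0 k0 i0 j0 + h)) x
        - fnet sigma d r L K w x)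
  <= (G * hid_const (L - 1) * B ^ (L - 1) * alpha + M) * Rabs h.
Proof.
  intros. rewrite Rabs_minus_sym, Rmult_plus_distr_r.
  apply (fnet_sub_abs_le L K w _ x alpha B G
           (fun k => if Nat.eqb k k0 then Rabs h else 0)
           (fun k => if Nat.eqb k j0 then Rabs h else 0)); auto;
    try (intros; apply upd_sub_abs_le); try (apply rsum1_single_le, Rabs_pos).
  intros k. destruct (Nat.eqb k k0); [apply Rabs_pos|lra].
Qed.

Lemma Fobj_upd_sub_abs_le L K n c2 alpha X Y w c h B G :
  1 <= alpha -> 1 <= B -> 0 <= G -> 0 <= c2 -> (1 <= n)%nat ->
  (forall l k i j, (1 <= l <= L - 1)%nat -> (1 <= k <= K)%nat ->
     (1 <= i <= r)%nat -> (j <= r)%nat -> Rabs (w l k i j) <= B) ->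
  (forall k, (1 <= k <= K)%nat -> Rabs (w L 1%nat 1%nat k) <= G) ->
  Rabs h <= 1 ->
  let D := G * hid_const (L - 1) * B ^ (L - 1) * alpha + M in
  Rabs (Fobj sigma d r L K n c2 alpha X Y (upd w c (at_c w c + h))
        - Fobj sigma d r L K n c2 alpha X Y w)
  <= Rabs h * (D * (D + 2 * mean_abs_residual sigma d r L K n alpha X Y w)
               + c2 * (2 * G + 1)).
Proof.
  intros Halpha HB HG Hc2 Hn Hw HwL Hh D.
  destruct c as [[[l0 k0] i0] j0]. cbn [at_c].
  assert (HD : 0 <= D).
  { pose proof (hid_const_ge0 (L - 1)). pose proof (pow_R1_Rle B (L - 1) HB). pose proof M_ge0.
    unfold D. apply Rplus_le_le_0_compat; [repeat apply Rmult_le_pos|]; lra. }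
  pose proof (Rabs_pos h). pose proof (rsum1_single_le (Rabs h) j0 K (Rabs_pos h)).
  pose proof (mean_abs_residual_ge0 sigma d r L K n alpha X Y w Hn).
  eapply Rle_trans.
  { apply Fobj_sub_abs_le with (delta := D * Rabs h) (G := G)
      (e := fun k => if Nat.eqb k j0 then Rabs h else 0); auto.
    - apply Rmult_le_pos; assumption.
    - intros x Hx. apply (fnet_upd_sub_abs_le L K w l0 k0 i0 j0 h x alpha B G); auto.
    - intros k _. rewrite Rabs_minus_sym.
      split; [apply upd_sub_abs_le|destruct (Nat.eqb k j0); lra]. }
  assert (D * Rabs h * (D * Rabs h) <= Rabs h * (D * D)).
  { assert (0 <= Rabs h * (D * D)) by (apply Rmult_le_pos; nra). nra. }
  assert (c2 * ((2 * G + 1) * rsum1 (fun k => if Nat.eqb k j0 then Rabs h else 0) K)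
          <= Rabs h * (c2 * (2 * G + 1))).
  { replace (Rabs h * (c2 * (2 * G + 1))) with (c2 * ((2 * G + 1) * Rabs h)) by ring.
    apply Rmult_le_compat_l; [exact Hc2|].
    apply Rmult_le_compat_l; lra. }
  nra.
Qed.

Lemma gradnorm_Fobj_le L K n c2 alpha X Y w B G :
  1 <= alpha -> 1 <= B -> 0 <= G -> 0 <= c2 -> (1 <= n)%nat ->
  (forall l k i j, (1 <= l <= L - 1)%nat -> (1 <= k <= K)%nat ->
     (1 <= i <= r)%nat -> (j <= r)%nat -> Rabs (w l k i j) <= B) ->
  (forall k, (1 <= k <= K)%nat -> Rabs (w L 1%nat 1%nat k) <= G) ->
  let D := G * hid_const (L - 1) * B ^ (L - 1) * alpha + M in
  gradnorm d r L K (Fobj sigma d r L K n c2 alpha X Y) w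
  <= sqrt (INR (length (coords d r L K)))
     * (D * (D + 2 * mean_abs_residual sigma d r L K n alpha X Y w) + c2 * (2 * G + 1)).
Proof.
  intros Halpha HB HG Hc2 Hn Hw HwL D.
  assert (Hpartial : forall c, Rabs (partial (Fobj sigma d r L K n c2 alpha X Y) w c)
    <= D * (D + 2 * mean_abs_residual sigma d r L K n alpha X Y w) + c2 * (2 * G + 1)).
  { intros c. apply partial_abs_le. intros h Hh.
    rewrite <- (Rabs_right h) at 2 by lra.
    apply Fobj_upd_sub_abs_le; auto. rewrite Rabs_right; lra. }
  apply gradnorm_le; [|exact Hpartial].
  eapply Rle_trans; [apply Rabs_pos|apply (Hpartial (0, 0, 0, 0)%nat)].
Qed.

Lemma mean_abs_residual_le L K n c2 alpha X Y w v G :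
  (1 <= n)%nat -> 0 <= c2 ->
  (forall k, (1 <= k <= K)%nat -> Rabs (w L 1%nat 1%nat k) <= G) ->
  mean_abs_residual sigma d r L K n alpha X Y w
  <= sqrt (Rmax (Fobj sigma d r L K n c2 alpha X Y v) 1)
     + INR K * M * (2 * G + maxnorm d r L K (wsub w v)).
Proof.
  intros Hn Hc2 HwL.
  set (del := maxnorm d r L K (wsub w v)).
  set (Q := INR K * M * (2 * G + del)).
  assert (HvL : forall k, (1 <= k <= K)%nat -> Rabs (v L 1%nat 1%nat k) <= G + del).
  { intros k Hk. pose proof (outer_weight_sub_le d r L K w v k Hk) as Hdel. fold del in Hdel.
    specialize (HwL k Hk).
    replace (v L 1%nat 1%nat k) with (w L 1%nat 1%nat k - (w L 1%nat 1%nat k - v L 1%nat 1%nat k))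
      by ring.
    eapply Rle_trans; [apply Rabs_triang|]. rewrite Rabs_Ropp. lra. }
  assert (HQ : forall x, Rabs (fnet sigma d r L K w x - fnet sigma d r L K v x) <= Q).
  { intros x. pose proof (fnet_abs_le L K w x G HwL). pose proof (fnet_abs_le L K v x _ HvL).
    eapply Rle_trans; [apply Rabs_triang|]. rewrite Rabs_Ropp. unfold Q. lra. }
  assert (HQ0 : 0 <= Q) by (eapply Rle_trans; [apply Rabs_pos|apply (HQ (fun _ => 0))]).
  assert (Hv : / INR n * rsum1 (fun i => Rabs (fnet sigma d r L K v (X i) - Y i)
                                         * box_ind alpha (X i) d) n
               <= sqrt (Rmax (Fobj sigma d r L K n c2 alpha X Y v) 1)).
  { apply mean_abs_le_sqrt; [exact Hn| |intros i|].
    - apply Rlt_le_trans with 1; [lra|apply Rmax_r].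
    - destruct (box_ind_cases alpha (X i) d) as [E|[E _]]; rewrite E; lra.
    - eapply Rle_trans; [|apply Rmax_l]. unfold Fobj.
      assert (0 <= c2 * rsum1 (fun j => v L 1%nat 1%nat j ^ 2) K)
        by (apply Rmult_le_pos, rsum1_nonneg; auto using pow2_ge_0).
      lra. }
  unfold mean_abs_residual.
  apply Rle_trans with
    (/ INR n * rsum1 (fun i => Rabs (fnet sigma d r L K v (X i) - Y i)
                               * box_ind alpha (X i) d + Q) n).
  - apply Rmult_le_compat_l; [left; apply Rinv_0_lt_compat, lt_0_INR; lia|].
    apply rsum1_le. intros i _.
    assert (Rabs (fnet sigma d r L K w (X i) - Y i)
            <= Rabs (fnet sigma d r L K v (X i) - Y i) + Q).
    { replace (fnet sigma d r L K w (X i) - Y i) with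
        ((fnet sigma d r L K v (X i) - Y i)
         + (fnet sigma d r L K w (X i) - fnet sigma d r L K v (X i))) by ring.
      eapply Rle_trans; [apply Rabs_triang|]. specialize (HQ (X i)). lra. }
    destruct (box_ind_cases alpha (X i) d) as [E|[E _]]; rewrite E; lra.
  - rewrite rsum1_add, rsum1_const, Rmult_plus_distr_l.
    replace (/ INR n * (INR n * Q)) with Q by (field; apply not_0_INR; lia).
    lra.
Qed.

End Network.

(** * Collecting the constants *)

Definition increment_const (C M c2 : R) : R := (C + M) ^ 2 + 2 * (C + M) * (1 + 4 * M) + 3 * c2.

Lemma increment_const_pos C M c2 : 0 <= C -> 0 <= M -> 0 < c2 -> 0 < increment_const C M c2.
Proof.
  intros HC HM Hc2. unfold increment_const.
  assert (0 <= (C + M) * (1 + 4 * M)) by (apply Rmult_le_pos; lra).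
  pose proof (pow2_ge_0 (C + M)). lra.
Qed.

Lemma sqrt_ratio_bounds Ln tn Phi del :
  0 < Ln <= tn -> 1 <= Phi -> del ^ 2 <= 2 * tn / Ln * Phi ->
  let s := sqrt (tn / Ln * Phi) in 1 <= s /\ sqrt Phi <= s /\ del <= 2 * s.
Proof.
  intros HLn HPhi Hdel s.
  assert (Hratio : 1 <= tn / Ln)
    by (apply Rmult_le_reg_r with Ln; [lra|]; unfold Rdiv; rewrite Rmult_assoc, Rinv_l; lra).
  assert (Hs2 : s * s = tn / Ln * Phi) by (apply sqrt_sqrt; nra).
  assert (Hs0 : 0 <= s) by apply sqrt_pos.
  split; [|split].
  - rewrite <- sqrt_1. apply sqrt_le_1_alt. nra.
  - apply sqrt_le_1_alt. nra.
  - assert (del ^ 2 <= 2 * (s * s)) by (rewrite Hs2; unfold Rdiv in *; nra). nra.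
Qed.

Lemma increment_const_le (C M c2 G B alpha K Ln tn Phi del R : R) (L : nat) :
  0 <= C -> 0 <= M -> 0 <= c2 -> 1 <= G -> 1 <= B -> 1 <= alpha -> 1 <= K -> (1 <= L)%nat ->
  0 < Ln <= tn -> 1 <= Phi -> del ^ 2 <= 2 * tn / Ln * Phi ->
  0 <= R <= sqrt Phi + K * M * (2 * G + del) ->
  let D := G * C * B ^ (L - 1) * alpha + M in
  D * (D + 2 * R) + c2 * (2 * G + 1)
  <= increment_const C M c2 * (K * sqrt (tn / Ln * Phi)) * (G * B ^ L * alpha) ^ 2.
Proof.
  intros HC HM Hc2 HG HB Halpha HK HL HLn HPhi Hdel [HR0 HR] D.
  destruct (sqrt_ratio_bounds Ln tn Phi del HLn HPhi Hdel) as (Hs & HsPhi & Hdel_s).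
  set (s := sqrt (tn / Ln * Phi)) in *. set (u := G * B ^ L * alpha).
  assert (HBL1 : 1 <= B ^ (L - 1)) by (apply pow_R1_Rle; lra).
  assert (HGu : G * B ^ (L - 1) * alpha <= u).
  { unfold u. replace L with (Datatypes.S (L - 1)) at 2 by lia. simpl.
    assert (0 <= G * B ^ (L - 1) * alpha) by (repeat apply Rmult_le_pos; lra).
    replace (G * (B * B ^ (L - 1)) * alpha) with (G * B ^ (L - 1) * alpha * B) by ring. nra. }
  assert (Hu : G <= u).
  { eapply Rle_trans; [|exact HGu]. assert (1 <= B ^ (L - 1) * alpha) by nra. nra. }
  assert (HD0 : 0 <= D)
    by (unfold D; apply Rplus_le_le_0_compat; [repeat apply Rmult_le_pos|]; lra).
  assert (HD : D <= (C + M) * u).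
  { unfold D. replace (G * C * B ^ (L - 1) * alpha) with (C * (G * B ^ (L - 1) * alpha)) by ring.
    nra. }
  set (T := K * s).
  assert (HT : s <= T) by (unfold T; nra).
  assert (HRu : R <= (1 + 4 * M) * T * u).
  { assert (K * M * (2 * G + del) <= 4 * M * T * u).
    { assert (0 <= K * M) by nra. assert (2 * G + del <= 4 * s * u) by nra.
      replace (4 * M * T * u) with (K * M * (4 * s * u)) by (unfold T; ring). nra. }
    assert (s <= T * u) by nra. nra. }
  assert (D * (D + 2 * R) <= (C + M) * u * ((C + M) * u + 2 * ((1 + 4 * M) * T * u)))
    by (apply Rmult_le_compat; lra).
  assert (0 <= (C + M) * u * ((C + M) * u)) by nra.
  assert (u <= T * u ^ 2) by nra.
  unfold increment_const. nra.
Qed.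

Theorem lemma2 :
  forall (sigma : R -> R),
    (exists M, forall x, Rabs (sigma x) <= M) ->
    (forall x, ex_derive sigma x) ->
    (exists M', forall x, Rabs (Derive sigma x) <= M') ->
  forall (d r L : nat) (c2 : R),
    (2 * d <= r)%nat -> (1 <= L)%nat -> 0 < c2 ->
  exists c5 : R, 0 < c5 /\
  forall (n K : nat) (X : nat -> Pt) (Y : nat -> R)
         (alpha Ln tn gam Bn : R) (w v : Weights),
    (1 <= n)%nat ->
    1 <= alpha -> 0 < Ln -> Ln <= tn -> 1 <= gam -> 1 <= Bn ->
    (forall k, (1 <= k <= K)%nat -> Rabs (w L 1%nat 1%nat k) <= gam) ->
    (forall l k i j, (1 <= l <= L - 1)%nat -> (1 <= k <= K)%nat ->
        (1 <= i <= r)%nat -> (j <= r)%nat -> Rabs (w l k i j) <= Bn) ->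
    (maxnorm d r L K (wsub w v)) ^ 2
      <= 2 * tn / Ln * Rmax (Fobj sigma d r L K n c2 alpha X Y v) 1 ->
    gradnorm d r L K (Fobj sigma d r L K n c2 alpha X Y) w
      <= c5 * (INR K * sqrt (INR K)) * Bn ^ (2 * L) * gam ^ 2 * alpha ^ 2
            * sqrt (tn / Ln * Rmax (Fobj sigma d r L K n c2 alpha X Y v) 1).
Proof.
  intros sigma [M Hsigma] Hd [M' HDsigma] d r L c2 _ HL Hc2.
  assert (HM : 0 <= M) by (eapply Rle_trans; [apply Rabs_pos|apply (Hsigma 0)]).
  assert (HM' : 0 <= M') by (eapply Rle_trans; [apply Rabs_pos|apply (HDsigma 0)]).
  pose proof (lipschitz_of_bounded_Derive sigma M' Hd HDsigma) as Hlip.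
  set (C := hid_const M M' d r (L - 1)).
  assert (HC : 0 <= C) by exact (hid_const_ge0 sigma M M' d r Hsigma HM' (L - 1)).
  set (N := (1 + (L - 1) * (r * S r) + r * S d)%nat).
  exists (sqrt (INR N) * increment_const C M c2). split.
  { apply Rmult_lt_0_compat; [apply sqrt_lt_R0, lt_0_INR; unfold N; nia|].
    now apply increment_const_pos. }
  intros n K X Y alpha Ln tn gam Bn w v Hn Halpha HLn Htn Hgam HBn HwL Hw Hdist.
  eapply Rle_trans.
  { apply (gradnorm_Fobj_le sigma M M' d r Hsigma Hlip HM' L K n c2 alpha X Y w Bn gam);
      auto; lra. }
  rewrite length_coords, mult_INR, sqrt_mult_alt by apply pos_INR. fold N.
  destruct K as [|K']; [simpl; rewrite sqrt_0; lra|].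
  apply Rle_trans with (sqrt (INR (S K')) * sqrt (INR N)
    * (increment_const C M c2
       * (INR (S K') * sqrt (tn / Ln * Rmax (Fobj sigma d r L (S K') n c2 alpha X Y v) 1))
       * (gam * Bn ^ L * alpha) ^ 2)).
  2:{ right. replace (2 * L)%nat with (L + L)%nat by lia. rewrite pow_add. ring. }
  apply Rmult_le_compat_l; [apply Rmult_le_pos; apply sqrt_pos|].
  apply increment_const_le with (del := maxnorm d r L (S K') (wsub w v)); auto; try lra.
  - apply (le_INR 1). lia.
  - apply Rmax_r.
  - split; [now apply mean_abs_residual_ge0|].
    apply (mean_abs_residual_le sigma M d r Hsigma); auto; lra.
Qed.
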